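(* Let $\bar x \in \mathrm{dom}\,\psi$, let $H > 0$, let $F'(\bar x) \in \partial F(\bar x)$ be a chosen subgradient with $F'(\bar x) \neq 0$, and let $A = A_H(\bar x) = \frac{1}{\sigma}\sqrt{\frac{H}{3}\|F'(\bar x)\|_*}$. Then $$H\, \|T_A(\bar x) - \bar x\| \;\leq\; 3\sigma A.$$
   Context: $\mathbb{E}$ is a finite-dimensional real vector space with an arbitrary norm $\|\cdot\|$; $\mathbb{E}^*$ is its dual with dual norm $\|g\|_* = \max\{\langle g, x\rangle : \|x\|\le 1\}$. $F = f + \psi$, where $\psi$ is a closed convex function with $\mathrm{dom}\,\psi \subseteq \mathbb{E}$ and $f$ is convex and twice continuously differentiable; subgradients of $F$ have the form $F'(\bar x) = \nabla f(\bar x) + \psi'(\bar x)$ with $\psi'(\bar x) \in \partial \psi(\bar x)$. The scaling function $d$ is differentiable and satisfies, for some $\sigma\in(0,1]$ and all $x,y \in \mathrm{dom}\,\psi$: $d(y) \ge d(x) + \langle \nabla d(x), y-x\rangle + \frac{\sigma}{2}\|y-x\|^2$ and $\|\nabla d(x) - \nabla d(y)\|_* \le \|x-y\|$. Bregman distance: $\rho(x,y) = d(y) - d(x) - \langle \nabla d(x), y-x\rangle$. For $A>0$, $$T_A(\bar x) = \arg\min_{y\in\mathrm{dom}\,\psi}\Big[ f(\bar x) + \langle \nabla f(\bar x), y-\bar x\rangle + \tfrac12 \langle \nabla^2 f(\bar x)(y-\bar x), y-\bar x\rangle + A\rho(\bar x,y) + \psi(y)\Big].$$ *)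

(* E = 'rV[R]_n (finite-dimensional real vector
   space, R : realType), the dual identified with 'rV[R]_n via the pairing dotp. *)
From HB Require Import structures.
From mathcomp Require Import all_boot all_order all_algebra.
From mathcomp Require Import all_classical all_reals all_analysis.
Set Implicit Arguments. Unset Strict Implicit. Unset Printing Implicit Defensive.
Import Order.TTheory GRing.Theory Num.Theory.
Import numFieldNormedType.Exports.
Local Open Scope classical_set_scope.
Local Open Scope ring_scope.

Definition dotp {R : realType} {n : nat} (g x : 'rV[R]_n) : R :=
  \sum_(i < n) g 0 i * x 0 i.

Definition is_norm {R : realType} {n : nat} (N : 'rV[R]_n -> R) : Prop :=
  [/\ forall x, N x = 0 -> x = 0,
      forall (a : R) x, N (a *: x) = `|a| * N x &
      forall x y, N (x + y) <= N x + N y].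

Definition dual_norm {R : realType} {n : nat} (N : 'rV[R]_n -> R)
  (g : 'rV[R]_n) : R :=
  sup [set dotp g x | x in [set x | N x <= 1]].

(* gradient (as an element of the dual space) and Hessian (matrix, (H h)_i = sum_j H i j h j) *)
Definition grad {R : realType} {n : nat} (f : 'rV[R]_n -> R) (x : 'rV[R]_n)
  : 'rV[R]_n := \row_j (('d f x : 'rV[R]_n -> R) (delta_mx 0 j)).

Definition hess {R : realType} {n : nat} (f : 'rV[R]_n -> R) (x : 'rV[R]_n)
  : 'M[R]_n := \matrix_(i, j) (('d (grad f) x : 'rV[R]_n -> 'rV[R]_n) (delta_mx 0 j)) 0 i.

Definition mx_apply {R : realType} {n : nat} (M : 'M[R]_n) (h : 'rV[R]_n)
  : 'rV[R]_n := h *m M^T.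

Definition convex_fun {R : realType} {n : nat} (f : 'rV[R]_n -> R) : Prop :=
  forall x y (t : R), 0 <= t <= 1 ->
    f (t *: x + (1 - t) *: y) <= t * f x + (1 - t) * f y.

Definition econvex_fun {R : realType} {n : nat} (psi : 'rV[R]_n -> \bar R)
  : Prop :=
  forall (x y : 'rV[R]_n) (t : R), 0 <= t <= 1 ->
    (psi (t *: x + (1 - t) *: y)%R <= t%:E * psi x + (1 - t)%:E * psi y)%E.

Definition edom {R : realType} {n : nat} (psi : 'rV[R]_n -> \bar R)
  : set 'rV[R]_n := [set x | (psi x < +oo)%E].

Definition closed_proper_convex {R : realType} {n : nat}
  (psi : 'rV[R]_n -> \bar R) : Prop :=
  [/\ econvex_fun psi, forall x, psi x != -oo%E, edom psi !=set0 &
      lower_semicontinuous psi].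

Definition subgrad {R : realType} {n : nat} (psi : 'rV[R]_n -> \bar R)
  (x s : 'rV[R]_n) : Prop :=
  forall y, (psi x + (dotp s (y - x)%R)%:E <= psi y)%E.

Definition bregman {R : realType} {n : nat} (d : 'rV[R]_n -> R)
  (x y : 'rV[R]_n) : R :=
  d y - d x - dotp (grad d x) (y - x).

Definition model {R : realType} {n : nat} (f : 'rV[R]_n -> R)
  (psi : 'rV[R]_n -> \bar R) (d : 'rV[R]_n -> R) (A : R) (xb y : 'rV[R]_n)
  : \bar R :=
  ((f xb + dotp (grad f xb) (y - xb)
    + 2^-1 * dotp (mx_apply (hess f xb) (y - xb)) (y - xb)
    + A * bregman d xb y)%:E + psi y)%E.

Definition is_TA {R : realType} {n : nat} (f : 'rV[R]_n -> R)
  (psi : 'rV[R]_n -> \bar R) (d : 'rV[R]_n -> R) (A : R) (xb T : 'rV[R]_n)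
  : Prop :=
  edom psi T /\ forall y, edom psi y -> (model f psi d A xb T <= model f psi d A xb y)%E.

From HB Require Import structures.
From mathcomp Require Import all_boot all_order all_algebra.
From mathcomp Require Import all_classical all_reals all_analysis.
From mathcomp Require Import lra ring.
Set Implicit Arguments. Unset Strict Implicit. Unset Printing Implicit Defensive.
Import Order.TTheory GRing.Theory Num.Theory.
Import numFieldNormedType.Exports.
Local Open Scope classical_set_scope.
Local Open Scope ring_scope.

(* Compare T = T_A(xb) with the points z_t = t xb + (1 - t) T, 0 < t < 1. Minimality of T,
   convexity of psi and the subgradient inequality at xb bound the decrease of the smooth
   part of the model from T to z_t by -t <s, T - xb>. In that decrease the Hessian term is
   nonnegative (f is convex), and strong convexity of d makes the Bregman term drop by at
   least sigma t (1 - t/2) N(T - xb)^2. Dividing by t and letting t -> 0 gives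
   A sigma N(T - xb)^2 <= <F'(xb), xb - T> <= ||F'(xb)||_* N(T - xb), and
   (sigma A)^2 = H/3 ||F'(xb)||_* turns this into H N(T - xb) <= 3 sigma A.
   The dual norm is a finite supremum because N dominates a multiple of the max norm
   (compactness of the unit sphere). *)

Section RowVector.
Variables (R : realType) (n : nat).
Implicit Types (g h x y : 'rV[R]_n).

Lemma segment_subl x y (t : R) : t *: x + (1 - t) *: y - x = (1 - t) *: (y - x).
Proof. by rewrite addrAC -{2}[x]scale1r -scalerBl -opprB scaleNr addrC scalerBr. Qed.

Lemma segment_subr x y (t : R) : y - (t *: x + (1 - t) *: y) = t *: (y - x).
Proof. by rewrite scalerBl scale1r opprD addrA opprB addrC addrA subrK scalerBr addrC. Qed.

Lemma dotpC g x : dotp g x = dotp x g.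
Proof. by apply: eq_bigr => i _; rewrite mulrC. Qed.

Lemma dotpDr g x y : dotp g (x + y) = dotp g x + dotp g y.
Proof. by rewrite /dotp -big_split; apply: eq_bigr => i _; rewrite mxE mulrDr. Qed.

Lemma dotpZr g a x : dotp g (a *: x) = a * dotp g x.
Proof. by rewrite /dotp mulr_sumr; apply: eq_bigr => i _; rewrite mxE mulrCA. Qed.

Lemma dotpNr g x : dotp g (- x) = - dotp g x.
Proof. by rewrite -scaleN1r dotpZr mulN1r. Qed.

Lemma dotpBrC g x y : dotp g (x - y) = - dotp g (y - x).
Proof. by rewrite -dotpNr opprB. Qed.

Lemma dotpDl g h x : dotp (g + h) x = dotp g x + dotp h x.
Proof. by rewrite dotpC dotpDr -!(dotpC x). Qed.

Lemma dotpBl g h x : dotp (g - h) x = dotp g x - dotp h x.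
Proof. by rewrite dotpDl (dotpC (- h)) dotpNr (dotpC x). Qed.

Lemma dotpZl a g x : dotp (a *: g) x = a * dotp g x.
Proof. by rewrite dotpC dotpZr dotpC. Qed.

Lemma dotp0r g : dotp g 0 = 0.
Proof. by rewrite -(scale0r 0) dotpZr mul0r. Qed.

Lemma dotpp_gt0 g : g != 0 -> 0 < dotp g g.
Proof.
move=> g0; have [i gi] : exists i, g 0 i != 0.
  apply/existsP; apply: contraR g0 => /existsPn g0; apply/eqP/rowP => i.
  by rewrite mxE; apply/eqP; rewrite -[_ == _]negbK g0.
rewrite /dotp (bigD1 i) //= ltr_pwDl ?sumr_ge0 // => [|j _]; rewrite -expr2.
  by rewrite exprn_even_gt0.
exact: sqr_ge0.
Qed.

Lemma continuous_dotpl x : continuous (dotp ^~ x).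
Proof.
move=> g; apply: differentiable_continuous.
have -> : dotp ^~ x = \sum_(i < n) (fun h : 'rV[R]_n => h 0 i * x 0 i).
  by apply/funext => h; rewrite fct_sumE.
by apply: differentiable_sum => i; apply: differentiableM => //; exact: differentiable_coord.
Qed.

Lemma dotp_grad (f : 'rV[R]_n -> R) x w : dotp (grad f x) w = 'd f x w.
Proof.
rewrite {2}(row_sum_delta w) linear_sum; apply: eq_bigr => j _.
by rewrite linearZ mxE mulrC.
Qed.

Lemma mx_apply_hess (f : 'rV[R]_n -> R) x w :
  mx_apply (hess f x) w = 'd (grad f) x w.
Proof.
rewrite {2}(row_sum_delta w) linear_sum; apply/rowP => i.
rewrite !mxE summxE; apply: eq_bigr => j _.
by rewrite linearZ !mxE.
Qed.

Lemma mx_applyZ (M : 'M[R]_n) a w : mx_apply M (a *: w) = a *: mx_apply M w.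
Proof. by rewrite /mx_apply scalemxAl. Qed.

End RowVector.

Section Norm.
Variables (R : realType) (n : nat) (N : 'rV[R]_n -> R).
Hypothesis normN : is_norm N.
Implicit Types (g x y : 'rV[R]_n).

Lemma is_normZ a x : N (a *: x) = `|a| * N x.
Proof. by case: normN. Qed.

Lemma is_norm_triangle x y : N (x + y) <= N x + N y.
Proof. by case: normN. Qed.

Lemma is_norm0 : N 0 = 0.
Proof. by rewrite -(scale0r 0) is_normZ normr0 mul0r. Qed.

Lemma is_normN x : N (- x) = N x.
Proof. by rewrite -scaleN1r is_normZ normrN1 mul1r. Qed.

Lemma is_norm_distC x y : N (x - y) = N (y - x).
Proof. by rewrite -is_normN opprB. Qed.

Lemma is_norm_ge0 x : 0 <= N x.
Proof.
have := is_norm_triangle x (- x); rewrite subrr is_norm0 is_normN; lra.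
Qed.

Lemma is_norm_gt0 x : x != 0 -> 0 < N x.
Proof.
move=> x0; rewrite lt_def is_norm_ge0 andbT; apply: contra x0 => /eqP.
by case: normN => eq0 _ _ /eq0 ->.
Qed.

Lemma is_norm_dist_dist x y : `|N x - N y| <= N (x - y).
Proof.
rewrite ler_norml; apply/andP; split.
  by have := is_norm_triangle (y - x) x; rewrite subrK is_norm_distC; lra.
by have := is_norm_triangle (x - y) y; rewrite subrK; lra.
Qed.

Lemma is_norm_le_mx_norm x : N x <= (\sum_(j < n) N (delta_mx 0 j)) * `|x|.
Proof.
rewrite {1}(row_sum_delta x) mulr_suml.
elim/big_ind2: _ => [|a b c e hab hce|j _]; first by rewrite is_norm0.
  exact: le_trans (is_norm_triangle _ _) (lerD hab hce).
rewrite is_normZ mulrC ler_wpM2l ?is_norm_ge0 //.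
by rewrite [leRHS]/Num.norm /= mx_normrE; apply/bigmax_geP; right; exists (0, j).
Qed.

Lemma is_norm_continuous : continuous N.
Proof.
move=> x; set C := \sum_(j < n) N (delta_mx 0 j) + 1.
have C_gt0 : 0 < C by rewrite ltr_wpDl ?sumr_ge0 // => j _; exact: is_norm_ge0.
apply/(@cvgrPdist_le _ _ _ (nbhs x) (nbhs_filter x)) => e e_gt0.
near=> y; apply: le_trans (is_norm_dist_dist x y) _.
apply: le_trans (is_norm_le_mx_norm _) _.
apply: (@le_trans _ _ (C * `|x - y|)).
  by rewrite ler_wpM2r // lerDl.
rewrite -ler_pdivlMl //; near: y.
by apply: cvgr_dist_le; [exact: cvg_id | rewrite mulr_gt0 ?invr_gt0].
Unshelve. all: by end_near.
Qed.

Lemma is_norm_ge_mx_norm : exists2 m, 0 < m & forall x, m * `|x| <= N x.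
Proof.
have [[g g0]|all0] := pselect (exists g : 'rV[R]_n, g != 0); last first.
  exists 1 => // x; have -> : x = 0 by apply: contra_notP all0 => /eqP x0; exists x.
  by rewrite normr0 mulr0 is_norm0.
set S := [set x : 'rV[R]_n | `|x| = 1].
have S0 : S !=set0 by exists (`|g|^-1 *: g); rewrite /S /= normfZV.
have S_compact : compact S.
  apply: bounded_closed_compact.
    by exists 1; split; [exact: num_real | move=> M M1 x /= ->; exact: ltW].
  apply: (@preimage_closed _ R (fun x : 'rV[R]_n => `|x|) [set 1]).
    by move=> y _; exact: norm_continuous.
  exact: closed_eq.
have [c /set_mem Sc cmin] := EVT_min_rV S0 S_compact (continuous_subspaceT is_norm_continuous).
have c0 : c != 0.
  by apply/eqP => c0; move: Sc; rewrite /S /= c0 normr0 => /eqP; rewrite eq_sym oner_eq0.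
exists (N c) => [|x]; first exact: is_norm_gt0.
have [->|x0] := eqVneq x 0; first by rewrite normr0 mulr0 is_norm0.
have -> : N x = `|x| * N (`|x|^-1 *: x).
  by rewrite is_normZ normfV normr_id mulrA mulfV ?mul1r // normr_eq0.
by rewrite mulrC ler_wpM2l // cmin // inE /S /= normfZV.
Qed.

Lemma has_sup_dual_norm g : has_sup [set dotp g x | x in [set x | N x <= 1]].
Proof.
split; first by exists (dotp g 0), 0 => //=; rewrite is_norm0.
have [m m_gt0 mN] := is_norm_ge_mx_norm.
exists ((\sum_i `|g 0 i|) / m) => _ [x /= Nx1 <-].
have gx : dotp g x <= (\sum_i `|g 0 i|) * `|x|.
  rewrite /dotp mulr_suml; apply: ler_sum => i _.
  apply: le_trans (ler_norm _) _; rewrite normrM ler_wpM2l //.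
  by rewrite [leRHS]/Num.norm /= mx_normrE; apply/bigmax_geP; right; exists (0, i).
apply: le_trans gx _; rewrite ler_pdivlMr // -mulrA ler_piMr ?sumr_ge0 //.
by rewrite mulrC; exact: le_trans (mN x) Nx1.
Qed.

Lemma dotp_le_dual_norm g x : dotp g x <= dual_norm N g * N x.
Proof.
have [->|x0] := eqVneq x 0; first by rewrite dotp0r is_norm0 mulr0.
have Nx_gt0 := is_norm_gt0 x0.
have : dotp g ((N x)^-1 *: x) <= dual_norm N g.
  apply: sup_upper_bound; first exact: has_sup_dual_norm.
  exists ((N x)^-1 *: x) => //=.
  by rewrite is_normZ ger0_norm ?invr_ge0 ?is_norm_ge0 // mulVf // gt_eqF.
by rewrite dotpZr mulrC ler_pdivrMr.
Qed.

Lemma dual_norm_gt0 g : g != 0 -> 0 < dual_norm N g.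
Proof.
move=> g0; have Ng_gt0 := is_norm_gt0 g0.
have := dotp_le_dual_norm g g; rewrite -ler_pdivrMr //; apply: lt_le_trans.
by rewrite divr_gt0 ?dotpp_gt0.
Qed.

End Norm.

Section ConvexGradient.
Variables (R : realType) (n : nat) (f : 'rV[R]_n -> R).
Implicit Types x y w : 'rV[R]_n.
Hypothesis f_convex : convex_fun f.

Lemma convex_diff_le x y : differentiable f x -> 'd f x (y - x) <= f y - f x.
Proof.
move=> f_dx; rewrite -deriveE //.
have cvg_right : (fun t : R => t^-1 *: (f (t *: (y - x) + x) - f x)) @ 0^'+
    --> 'D_(y - x) f x.
  move=> A /(diff_derivable f_dx) /nbhs_ballP [e e_gt0 eA].
  by exists e => // t ? /lt0r_neq0; exact: eA.
apply: (cvgr_to_le cvg_right); near=> t.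
have t_gt0 : 0 < t by near: t; exact: nbhs_right_gt.
have t_lt1 : t < 1 by near: t; exact: nbhs_right_lt.
rewrite /= ler_pdivrMl //.
have -> : t *: (y - x) + x = t *: y + (1 - t) *: x.
  by rewrite scalerBr scalerBl scale1r addrA addrAC.
have : f (t *: y + (1 - t) *: x) <= t * f y + (1 - t) * f x.
  by apply: f_convex; rewrite !ltW.
lra.
Unshelve. all: by end_near.
Qed.

Hypothesis f_diff : forall x, differentiable f x.

Lemma convex_grad_le x y : dotp (grad f x) (y - x) <= f y - f x.
Proof. by rewrite dotp_grad; exact: convex_diff_le. Qed.

Lemma convex_grad_monotone x y : 0 <= dotp (grad f y - grad f x) (y - x).
Proof.
have := convex_grad_le y x; rewrite dotpBrC lerNl opprB => fyx.
by rewrite dotpBl subr_ge0 (le_trans (convex_grad_le x y)).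
Qed.

Lemma convex_hess_psd x w :
  differentiable (grad f) x -> 0 <= dotp (mx_apply (hess f x) w) w.
Proof.
move=> gf_dx; rewrite mx_apply_hess -deriveE //.
have := @diff_derivable _ _ _ (grad f) x w gf_dx.
move=> /(continuous_cvg _ (@continuous_dotpl R n w _)) cvg_dotp.
apply: (cvgr_to_ge cvg_dotp); near=> t.
have t_neq0 : t != 0 by near: t; exact: nbhs_dnbhs_neq.
have := convex_grad_monotone x (t *: w + x).
rewrite addrK dotpZr /= dotpZl.
case: (ltgtP t 0) t_neq0 => // t0 _.
  by rewrite !nmulr_rge0 ?invr_lt0.
by rewrite !pmulr_rge0 ?invr_gt0.
Unshelve. all: by end_near.
Qed.

End ConvexGradient.

Section StronglyConvex.
Variables (R : realType) (n : nat) (N : 'rV[R]_n -> R) (D : set 'rV[R]_n).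
Variables (d : 'rV[R]_n -> R) (sigma : R).
Implicit Types x y : 'rV[R]_n.
Hypothesis normN : is_norm N.
Hypothesis d_sc : forall x y, D x -> D y ->
  d x + dotp (grad d x) (y - x) + sigma / 2 * N (y - x) ^+ 2 <= d y.

Lemma strongly_convex_grad_monotone x y : D x -> D y ->
  sigma * N (y - x) ^+ 2 <= dotp (grad d y - grad d x) (y - x).
Proof.
move=> Dx Dy; have := d_sc Dy Dx; rewrite dotpBrC (is_norm_distC normN).
have := d_sc Dx Dy; rewrite dotpBl.
(* [lra] compares atoms up to conversion, which would unfold [grad]: abstract them first. *)
generalize (dotp (grad d x) (y - x)) (dotp (grad d y) (y - x)) => a b.
lra.
Qed.

Lemma bregman_segment_gap x y t :
  D x -> D y -> D (t *: x + (1 - t) *: y) -> 0 <= t < 1 ->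
  sigma * t * N (y - x) ^+ 2 * (1 - t / 2)
    <= bregman d x y - bregman d x (t *: x + (1 - t) *: y).
Proof.
move=> Dx Dy Dz /andP[t_ge0 t_lt1].
have t1_gt0 : 0 < 1 - t by rewrite subr_gt0.
set z := t *: x + (1 - t) *: y.
have mono : sigma * (1 - t) * N (y - x) ^+ 2 <= dotp (grad d z - grad d x) (y - x).
  rewrite -(ler_pM2l t1_gt0) -dotpZr -segment_subl.
  have -> : (1 - t) * (sigma * (1 - t) * N (y - x) ^+ 2) = sigma * N (z - x) ^+ 2.
    by rewrite segment_subl (is_normZ normN) (gtr0_norm t1_gt0); ring.
  exact: strongly_convex_grad_monotone.
have sc := d_sc Dz Dy.
rewrite -/z segment_subr dotpZr (is_normZ normN) (ger0_norm t_ge0) in sc.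
rewrite /bregman segment_subl dotpZr.
rewrite dotpBl in mono; move: sc; move/(ler_wpM2l t_ge0): mono.
generalize (dotp (grad d z) (y - x)) (dotp (grad d x) (y - x)) (d z) => gz gx dz.
lra.
Qed.
End StronglyConvex.

Section CompositeMinimizer.
Variables (R : realType) (n : nat) (psi : 'rV[R]_n -> \bar R).
Implicit Types x y : 'rV[R]_n.
Hypothesis psi_convex : econvex_fun psi.
Hypothesis psi_ninfty : forall x, psi x != -oo%E.

Lemma edom_fineK x : edom psi x -> psi x = (fine (psi x))%:E.
Proof. by move=> dom_x; rewrite fineK // fin_numE psi_ninfty lt_eqF. Qed.

Lemma edom_segment x y (t : R) : edom psi x -> edom psi y -> 0 <= t <= 1 ->
  edom psi (t *: x + (1 - t) *: y).
Proof.
move=> dom_x dom_y t01; apply: le_lt_trans (psi_convex x y t01) _.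
by rewrite (edom_fineK dom_x) (edom_fineK dom_y) -!EFinM -EFinD ltry.
Qed.

Lemma argmin_segment_decrease (S : 'rV[R]_n -> R) x y s (t : R) :
  subgrad psi x s -> edom psi x -> edom psi y ->
  (forall z, edom psi z -> ((S y)%:E + psi y <= (S z)%:E + psi z)%E) ->
  0 <= t <= 1 ->
  S y - S (t *: x + (1 - t) *: y) <= - (t * dotp s (y - x)).
Proof.
move=> s_sub dom_x dom_y y_min t01.
have dom_z := edom_segment dom_x dom_y t01.
(* restated so that [y - x] is elaborated with the same instances as in the goal *)
have s_sub_y : (psi x + (dotp s (y - x))%:E <= psi y)%E := s_sub y.
move: (psi_convex x y t01) s_sub_y (y_min _ dom_z).
rewrite (edom_fineK dom_z) (edom_fineK dom_x) (edom_fineK dom_y).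
rewrite -!EFinM -!EFinD !lee_fin.
case/andP: t01 => t_ge0 _.
generalize (fine (psi x)) (fine (psi y)) (fine (psi (t *: x + (1 - t) *: y)))
  (dotp s (y - x)) => a b c g.
nra.
Qed.

End CompositeMinimizer.

Section TADescent.
Variables (R : realType) (n : nat) (N f d : 'rV[R]_n -> R) (psi : 'rV[R]_n -> \bar R).
Variables (sigma A : R) (xb s T : 'rV[R]_n).
Implicit Types x y : 'rV[R]_n.
Hypotheses (normN : is_norm N) (f_convex : convex_fun f).
Hypotheses (f_diff : forall x, differentiable f x).
Hypothesis gradf_diff : forall x, differentiable (grad f) x.
Hypotheses (psi_convex : econvex_fun psi) (psi_ninfty : forall x, psi x != -oo%E).
Hypothesis d_sc : forall x y, edom psi x -> edom psi y ->
  d x + dotp (grad d x) (y - x) + sigma / 2 * N (y - x) ^+ 2 <= d y.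
Hypotheses (A_ge0 : 0 <= A) (dom_xb : edom psi xb) (s_sub : subgrad psi xb s).
Hypothesis T_TA : is_TA f psi d A xb T.

Lemma TA_segment_bound (t : R) : 0 < t < 1 ->
  A * sigma * N (T - xb) ^+ 2 * (1 - t / 2) <= - dotp (grad f xb + s) (T - xb).
Proof.
move=> /andP[t_gt0 t_lt1].
have t_ge0_le1 : 0 <= t <= 1 by rewrite !ltW.
have t_ge0_lt1 : 0 <= t < 1 by rewrite ltW.
case: T_TA => dom_T T_min.
have dom_z := edom_segment psi_convex psi_ninfty dom_xb dom_T t_ge0_le1.
have decr := argmin_segment_decrease psi_convex psi_ninfty
  (S := fun y => f xb + dotp (grad f xb) (y - xb)
    + 2^-1 * dotp (mx_apply (hess f xb) (y - xb)) (y - xb) + A * bregman d xb y)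
  s_sub dom_xb dom_T T_min t_ge0_le1.
have gap := bregman_segment_gap normN d_sc dom_xb dom_T dom_z t_ge0_lt1.
have t2_ge0 : 0 <= t * (2 - t) by rewrite mulr_ge0 ?ltW // subr_gt0; lra.
have hess_ge0 := mulr_ge0 t2_ge0
  (convex_hess_psd f_convex f_diff (T - xb) (gradf_diff xb)).
rewrite segment_subl mx_applyZ !dotpZl !dotpZr in decr.
rewrite -(ler_pM2l t_gt0) dotpDl.
move: decr (ler_wpM2l A_ge0 gap) hess_ge0.
generalize (dotp (grad f xb) (T - xb)) (dotp s (T - xb))
  (dotp (mx_apply (hess f xb) (T - xb)) (T - xb))
  (bregman d xb T) (bregman d xb (t *: xb + (1 - t) *: T)) => g sg Q bT bz.
lra.
Qed.
End TADescent.

Lemma ler_of_shrinking (R : realType) (P K : R) :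
  (forall t, 0 < t < 1 -> P * (1 - t / 2) <= K) -> P <= K.
Proof.
move=> shrink_le.
have cvgP : (fun t => P * (1 - t / 2)) @ 0^'+ --> P * (1 - 0 / 2).
  apply: cvg_at_right_filter; apply: cvgM; first exact: cvg_cst.
  by apply: cvgB; [exact: cvg_cst | apply: cvgM; [exact: cvg_id | exact: cvg_cst]].
rewrite mul0r subr0 mulr1 in cvgP.
apply: (cvgr_to_le cvgP); near=> t; apply: shrink_le.
by apply/andP; split; near: t; [exact: nbhs_right_gt | exact: nbhs_right_lt].
Unshelve. all: by end_near.
Qed.

Lemma regularized_step_bound (R : realType) (H sigma D A r : R) :
  0 < H -> 0 < sigma -> 0 < D -> 0 <= r ->
  A = sigma^-1 * Num.sqrt (H / 3 * D) -> A * sigma * r ^+ 2 <= D * r ->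
  H * r <= 3 * sigma * A.
Proof.
move=> H_gt0 sigma_gt0 D_gt0 r_ge0 -> step.
set S := Num.sqrt (H / 3 * D).
have HD_gt0 : 0 < H / 3 * D by rewrite !mulr_gt0 ?invr_gt0.
have S_gt0 : 0 < S by rewrite sqrtr_gt0.
have S2 : S ^+ 2 = H / 3 * D by rewrite sqr_sqrtr // ltW.
have sigma_neq0 : sigma != 0 by rewrite gt_eqF.
have -> : 3 * sigma * (sigma^-1 * S) = 3 * S by field.
have sigmaA : sigma^-1 * S * sigma = S by field.
rewrite sigmaA in step.
have [-> | r_gt0] := eqVneq r 0; first by rewrite mulr0 mulr_ge0 // ltW.
have {}r_gt0 : 0 < r by rewrite lt_def r_gt0.
have Sr_le : S * r <= D by rewrite -(ler_pM2r r_gt0) -mulrA -expr2.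
rewrite -(ler_pM2l S_gt0); nra.
Qed.

Theorem corollary1 (R : realType) (n : nat) (N : 'rV[R]_n -> R)
  (f : 'rV[R]_n -> R) (psi : 'rV[R]_n -> \bar R) (d : 'rV[R]_n -> R)
  (sigma : R)
  (hN : is_norm N)
  (hpsi : closed_proper_convex psi)
  (hf_conv : convex_fun f)
  (hf_d1 : forall x, differentiable f x)
  (hf_d2 : forall x, differentiable (grad f) x)
  (hf_c2 : continuous (hess f))
  (hsigma : 0 < sigma <= 1)
  (hd_diff : forall x, edom psi x -> differentiable d x)
  (hd_sc : forall x y, edom psi x -> edom psi y ->
     d x + dotp (grad d x) (y - x) + sigma / 2 * N (y - x) ^+ 2 <= d y)
  (hd_lip : forall x y, edom psi x -> edom psi y ->
     dual_norm N (grad d x - grad d y) <= N (x - y))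
  (xb : 'rV[R]_n) (hxb : edom psi xb)
  (H : R) (hH : 0 < H)
  (s : 'rV[R]_n) (hs : subgrad psi xb s)
  (hF : grad f xb + s != 0)
  (A : R) (hA : A = sigma^-1 * Num.sqrt (H / 3 * dual_norm N (grad f xb + s)))
  (T : 'rV[R]_n) (hT : is_TA f psi d A xb T) :
  H * N (T - xb) <= 3 * sigma * A.
Proof.
have /andP[sigma_gt0 _] := hsigma.
have [psi_convex psi_ninfty _ _] := hpsi.
have A_ge0 : 0 <= A by rewrite hA mulr_ge0 ?invr_ge0 ?sqrtr_ge0 // ltW.
apply: (regularized_step_bound hH sigma_gt0 (dual_norm_gt0 hN hF) (is_norm_ge0 hN _) hA).
apply: le_trans (ler_of_shrinking (TA_segment_bound hN hf_conv hf_d1 hf_d2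
  psi_convex psi_ninfty hd_sc A_ge0 hxb hs hT)) _.
by rewrite -dotpNr -(is_normN hN) dotp_le_dual_norm.
Qed.
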